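(* For integers $n\ge1$ and $k>\ell\ge1$, $\mu^{\{0,1\}}_{k,\ell}(\mathbb{Z}/n\mathbb{Z})\le\left\lfloor\frac{n}{k+\ell}\right\rfloor$.
   Context: For subsets $X,Y$ of an abelian group, $X+Y=\{x+y: x\in X, y\in Y\}$, and for an integer $j\ge 1$, $jX=X+\dots+X$ ($j$ copies); $0X=\{0\}$. For $A,C\subseteq \mathbb{Z}/n\mathbb{Z}$ and an integer $j\ge 1$, define $j *_C A = jA+(j-1)C$. A set $A\subseteq\mathbb{Z}/n\mathbb{Z}$ is $C$-$(k,\ell)$-sum-free if $(k *_C A)\cap(\ell *_C A)=\emptyset$. $\mu^C_{k,\ell}(\mathbb{Z}/n\mathbb{Z})$ denotes the maximum size of a $C$-$(k,\ell)$-sum-free subset of $\mathbb{Z}/n\mathbb{Z}$. *)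

(* Z/nZ is modelled as 'I_n with addition mod n, which is
   valid for every n >= 1 (including n = 1, where 'Z_n would be wrong). *)
From mathcomp Require Import all_boot.
Set Implicit Arguments. Unset Strict Implicit. Unset Printing Implicit Defensive.

Definition sumset (n : nat) (X Y : {set 'I_n}) : {set 'I_n} :=
  [set z : 'I_n | [exists x in X, exists y in Y, (z : nat) == (x + y) %% n]].

Definition zeroset (n : nat) : {set 'I_n} := [set z : 'I_n | (z : nat) == 0 %% n].

Definition nfold (n : nat) (j : nat) (X : {set 'I_n}) : {set 'I_n} :=
  iter j (sumset X) (zeroset n).

(* j *_C A = jA + (j-1)C  (used for j >= 1) *)
Definition starC (n : nat) (C : {set 'I_n}) (j : nat) (A : {set 'I_n}) : {set 'I_n} :=
  sumset (nfold j A) (nfold j.-1 C).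

Definition sum_free (n : nat) (C : {set 'I_n}) (k l : nat) (A : {set 'I_n}) : bool :=
  (starC C k A :&: starC C l A) == set0.

Definition mu (n : nat) (C : {set 'I_n}) (k l : nat) : nat :=
  \max_(A : {set 'I_n} | sum_free C k l A) #|A|.

Definition C01 (n : nat) : {set 'I_n} :=
  [set z : 'I_n | ((z : nat) == 0 %% n) || ((z : nat) == 1 %% n)].

From mathcomp Require Import all_boot.
From mathcomp Require Import ssralg finalg zmodp zify.
Set Implicit Arguments. Unset Strict Implicit. Unset Printing Implicit Defensive.
Import GRing.Theory.

(* In a finite abelian group generated by c, Dyson's e-transform gives the
   Cauchy-Davenport type bound |X + A + {0, c}| >= min(|G|, |X| + |A|).
   Iterating it, every nonempty A satisfies |j *_{0,1} A| >= min(n, j|A|) in Z/nZ.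
   If A is {0,1}-(k,l)-sum-free, the sets k *_{0,1} A and l *_{0,1} A are disjoint
   and nonempty, so neither bound can be n; hence k|A| + l|A| <= n. *)

Section AddSet.
Variable G : finZmodType.
Local Open Scope ring_scope.
Implicit Types (X Y Z A : {set G}) (e : G).

Definition addset X Y : {set G} := [set x + y | x in X, y in Y].

Definition shift e X : {set G} := [set x + e | x in X].

Lemma card_shift e X : #|shift e X| = #|X|.
Proof. by apply: card_imset; apply: addIr. Qed.

Lemma addsetC X Y : addset X Y = addset Y X.
Proof.
by apply/setP => z; apply/imset2P/imset2P => -[x y xX yY ->];
  exists y x => //; rewrite addrC.
Qed.

Lemma addsetA X Y Z : addset X (addset Y Z) = addset (addset X Y) Z.
Proof.
apply/setP => w; apply/imset2P/imset2P.
- case=> x _ xX /imset2P [y z yY zZ ->] ->.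
  by exists (x + y) z; rewrite ?addrA //; apply/imset2P; exists x y.
- case=> _ z /imset2P [x y xX yY ->] zZ ->.
  by exists x (y + z); rewrite ?addrA //; apply/imset2P; exists y z.
Qed.

Lemma addsetCA X Y Z : addset X (addset Y Z) = addset Y (addset X Z).
Proof. by rewrite !addsetA (addsetC X). Qed.

Lemma addset0 X : addset X [set 0] = X.
Proof.
apply/setP => z; apply/imset2P/idP => [[x y xX /set1P -> ->]|zX].
  by rewrite addr0.
by exists z 0; rewrite ?set11 ?addr0.
Qed.

Lemma addset_subl X Y : 0 \in Y -> X \subset addset X Y.
Proof.
by move=> Y0; apply/subsetP => x xX; apply/imset2P; exists x 0; rewrite ?addr0.
Qed.

Lemma shift_sub_addset X A a : a \in A -> shift a X \subset addset X A.
Proof.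
by move=> aA; apply/subsetP => _ /imsetP [x xX ->]; apply/imset2P; exists x a.
Qed.

Section DysonTransform.
Variables (X A : {set G}) (e : G).

Definition dyson_set := X :|: shift e A.
Definition dyson_summands := A :&: [set y | y + e \in X].

Lemma card_dyson : (#|dyson_set| + #|dyson_summands| = #|X| + #|A|)%N.
Proof.
have capE : X :&: shift e A = shift e dyson_summands.
  apply/setP => z; apply/setIP/imsetP => [[zX /imsetP [y yA zE]]|[y]].
    by exists y; rewrite // !inE yA -zE.
  by rewrite !inE => /andP [yA yX] ->; split; last by apply/imsetP; exists y.
by rewrite -(card_shift e A) -(card_shift e dyson_summands) -capE cardsUI.
Qed.

Lemma addset_dyson_sub : addset dyson_set dyson_summands \subset addset X A.
Proof.
apply/subsetP => _ /imset2P [x y + /setIP [yA] + ->]; rewrite inE => /setUP [xX _|].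
  by apply/imset2P; exists x y.
case/imsetP => b bA -> yX; apply/imset2P; exists (y + e) b => //.
by rewrite addrAC [RHS]addrAC [b + y]addrC.
Qed.

End DysonTransform.

Variable c : G.
Hypothesis c_generates : forall z : G, exists i : nat, z = c *+ i.

Lemma shift_closed_setT X : X != set0 -> shift c X \subset X -> X = setT.
Proof.
case/set0Pn => x xX cX; apply/setP => z; rewrite inE -(subrK x z) addrC.
have [i ->] := c_generates (z - x); elim: i => [|i IHi]; first by rewrite mulr0n addr0.
by rewrite mulrSr addrA; apply: (subsetP cX); apply/imsetP; exists (x + c *+ i).
Qed.

(* The case where no Dyson transform shrinks A. *)
Lemma card_addset_pair_stable X A :
    X != set0 -> A != set0 ->
    (forall x a b, x \in X -> a \in A -> b \in A -> x + (b - a) \in X) ->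
  (minn #|G| (#|X| + #|A|) <= #|addset (addset X A) [set 0%R; c]|)%N.
Proof.
move=> nX /set0Pn [a aA] stab.
have X0 : shift a X \subset addset (addset X A) [set 0%R; c].
  exact: subset_trans (shift_sub_addset _ aA) (addset_subl _ (set21 0 c)).
have [XT|XnT] := eqVneq X setT.
  apply: leq_trans (geq_minl _ _) _.
  by rewrite -cardsT -XT -(card_shift a); exact: subset_leq_card.
have /subsetPn [_ /imsetP [x xX ->] xcX] : ~~ (shift c X \subset X).
  by apply: contra XnT => /(shift_closed_setT nX) ->.
(* The translate Y of A misses X, and X :|: Y shifted by a fits in X + A + {0, c}. *)
pose Y := shift (x + c - a) A.
have XY0 : X :&: Y = set0.
  apply/setP => z; rewrite !inE; apply/negP => /andP [zX /imsetP [b bA zE]].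
  have := stab z b a zX bA aA; rewrite zE.
  by rewrite addrAC [b + (a - b)]addrC subrK addrC subrK (negbTE xcX).
apply: leq_trans (geq_minr _ _) _.
have -> : (#|X| + #|A| = #|X :|: Y|)%N.
  by rewrite -(card_shift (x + c - a) A) -cardsUI XY0 cards0 addn0.
rewrite -(card_shift a); apply: subset_leq_card; apply/subsetP => _ /imsetP [w + ->].
case/setUP => [wX | /imsetP [b bA ->]].
  by apply: (subsetP X0); apply/imsetP; exists w.
apply/imset2P; exists (x + b) c; rewrite ?set22 //; first by apply/imset2P; exists x b.
by rewrite -addrA subrK addrC addrAC.
Qed.

Lemma card_addset_pair X A : X != set0 -> A != set0 ->
  (minn #|G| (#|X| + #|A|) <= #|addset (addset X A) [set 0%R; c]|)%N.
Proof.
move: {2}#|A| (leqnn #|A|) => N; elim: N X A => [|N IHN] X A leAN nX nA.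
  by move: nA; rewrite -card_gt0; case: #|A| leAN.
have [/exists_inP [x xX /exists_inP [a aA /exists_inP [b bA bxaX]]]|] :=
  boolP [exists x in X, exists a in A, exists b in A, b + (x - a) \notin X].
- (* Transforming with e = x - a keeps a and drops b from A. *)
  set e := x - a.
  have aA' : a \in dyson_summands X A e by rewrite !inE aA /e addrC subrK.
  have ltA' : (#|dyson_summands X A e| < #|A|)%N.
    apply: proper_card; apply/properP; split; first exact: subsetIl.
    by exists b; rewrite // !inE bA (negbTE bxaX).
  have nX' : dyson_set X A e != set0 by apply/set0Pn; exists x; rewrite inE xX.
  have nA' : dyson_summands X A e != set0 by apply/set0Pn; exists a.
  have := IHN _ _ (leq_trans ltA' leAN) nX' nA'; rewrite card_dyson => /leq_trans; apply.
  exact/subset_leq_card/imset2S/subxx/addset_dyson_sub.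
- rewrite negb_exists_in => /forall_inP stab.
  apply: card_addset_pair_stable => // y a b yX aA bA.
  move: (stab y yX); apply: contraR => ybaX.
  by apply/exists_inP; exists a => //; apply/exists_inP; exists b; rewrite // addrCA.
Qed.

End AddSet.

Section ZmodN.
Variable m : nat.
Local Notation n := m.+1.
Implicit Types (X Y A C : {set 'I_n}).

Lemma sumsetE X Y : sumset X Y = addset X Y.
Proof.
apply/setP => z; rewrite inE; apply/exists_inP/imset2P.
  by case=> x xX /exists_inP [y yY /eqP zE]; exists x y => //; apply: val_inj.
by case=> x y xX yY ->; exists x => //; apply/exists_inP; exists y.
Qed.

Lemma zerosetE : zeroset n = [set 0%R].
Proof. by apply/setP => z; rewrite !inE -val_eqE. Qed.

Lemma C01E : C01 n = [set 0%R; inZp 1].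
Proof. by apply/setP => z; rewrite !inE -!val_eqE. Qed.

Lemma Zp_one_generates (z : 'I_n) : exists i, z = ((inZp 1 : 'I_n) *+ i)%R.
Proof.
by exists z; apply: val_inj; rewrite Zp_mulrn /= modnMml mul1n modn_small.
Qed.

Lemma starC1 C A : starC C 1 A = A.
Proof. by rewrite /starC /= !sumsetE zerosetE [addset A _]addset0 addset0. Qed.

Lemma starCS C A j : starC C j.+2 A = addset (addset (starC C j.+1 A) A) C.
Proof.
rewrite /starC /= !sumsetE -!addsetA addsetCA.
by do 2 congr addset; rewrite addsetA addsetC.
Qed.

Lemma card_starC01 A j : A != set0 ->
  minn n (j.+1 * #|A|) <= #|starC (C01 n) j.+1 A|.
Proof.
move=> nA; elim: j => [|j IHj]; first by rewrite starC1 mul1n geq_minr.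
have nS : starC (C01 n) j.+1 A != set0.
  by rewrite -card_gt0 (leq_trans _ IHj) // leq_min muln_gt0 card_gt0 nA.
have minn_shift a b s : minn n b <= s -> minn n (a + b) <= minn n (s + a) by lia.
have := card_addset_pair Zp_one_generates nS nA; rewrite card_ord -C01E -starCS.
by apply: leq_trans; rewrite mulSn; apply: minn_shift.
Qed.

End ZmodN.

Lemma leq_add_of_minn (n x y : nat) : 0 < n -> 0 < x -> 0 < y ->
  minn n x + minn n y <= n -> x + y <= n.
Proof. by rewrite /minn; case: ifP; case: ifP; lia. Qed.

Theorem theorem3p2 (n k l : nat) (hn : 1 <= n) (hl : 1 <= l) (hlk : l < k) :
  mu (C01 n) k l <= n %/ (k + l).
Proof.
case: n hn => [//|m] _; case: k hlk => [//|k] _; case: l hl => [//|l] _.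
apply/bigmax_leqP => A sfA; have [->|nA] := eqVneq A set0; first by rewrite cards0.
have disj : #|starC (C01 m.+1) k.+1 A| + #|starC (C01 m.+1) l.+1 A| <= m.+1.
  by rewrite -cardsUI (eqP sfA) cards0 addn0 (leq_trans (max_card _)) ?card_ord.
rewrite leq_divRL // mulnC mulnDl; apply: leq_add_of_minn; rewrite ?muln_gt0 ?card_gt0 //.
exact: leq_trans (leq_add (card_starC01 k nA) (card_starC01 l nA)) disj.
Qed.
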